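(* Let $S$ be a SAT problem on $n$ variables with clauses represented by $z_1,\dots,z_m$, and for each $j$ let $\mathcal T'_j=\{\lambda\in O(1)^n : M(z_j)\subseteq(1,\lambda)\}$. Then $S$ is unsatisfiable if and only if $\bigcup_{j=1}^m\mathcal T'_j=O(1)^n$.
   Context: $\mathbb{R}^{n,n}$ has orthonormal basis $e_1,\dots,e_{2n}$ with $e_i\cdot e_j=\delta_{ij}(-1)^{i+1}$, identified with $\mathbb{R}^n\times\mathbb{R}^n$ via $\sum_i(x_ie_{2i-1}+y_ie_{2i})\mapsto(x,y)$. Witt basis: $p_i=\tfrac12(e_{2i-1}+e_{2i})$, $q_i=\tfrac12(e_{2i-1}-e_{2i})$. For $t\in O(n)$, $(1,t):=\{(x,t(x)):x\in\mathbb{R}^n\}$; in particular $P=(1,1)=\mathrm{span}\{p_1,\dots,p_n\}$ and $(1,\lambda)$ is the image of $P$ under the isometry $\mathrm{id}\times\lambda$. $O(1)^n$ is the group of diagonal $n\times n$ matrices with entries $\pm1$. SAT encoding in the Clifford algebra $Cl(\mathbb{R}^{n,n})$: $\rho_i\mapsto q_ip_i$, $\bar\rho_i\mapsto p_iq_i$; a clause $(\ell_{j_1}\lor\dots\lor\ell_{j_k})$ on distinct variables is represented by $z=\bar\ell_{j_1}\cdots\bar\ell_{j_k}$ (product of encodings of negated literals); $M(z)$ is the span of the first vectors of the factors of $z$ (e.g. $M(q_1p_1\,p_2q_2)=\mathrm{span}\{q_1,p_2\}$). *)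

From HB Require Import structures.
From mathcomp Require Import all_boot all_order all_algebra.
Set Implicit Arguments. Unset Strict Implicit. Unset Printing Implicit Defensive.
Import Order.TTheory GRing.Theory Num.Theory.
Local Open Scope ring_scope.

(* R^{n,n} identified with R^n x R^n; a vector (x,y) is the row vector
   row_mx x y : 'rV_(n+n).  e_{2i-1} |-> (delta_i, 0), e_{2i} |-> (0, delta_i). *)
Definition ex (R : fieldType) (n : nat) (i : 'I_n) : 'rV[R]_(n + n) :=
  row_mx (delta_mx 0 i) 0.
Definition ey (R : fieldType) (n : nat) (i : 'I_n) : 'rV[R]_(n + n) :=
  row_mx 0 (delta_mx 0 i).

Definition wp (R : fieldType) (n : nat) (i : 'I_n) : 'rV[R]_(n + n) :=
  2^-1 *: (ex R i + ey R i).
Definition wq (R : fieldType) (n : nat) (i : 'I_n) : 'rV[R]_(n + n) :=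
  2^-1 *: (ex R i - ey R i).

(* literal on variable i: (i, true) = rho_i, (i, false) = bar rho_i *)
Definition literal (n : nat) := ('I_n * bool)%type.
Definition negl (n : nat) (l : literal n) : literal n := (l.1, ~~ l.2).

(* A Clifford factor q_i p_i (resp. p_i q_i) is recorded as the ordered pair
   of its two vector factors (first, second). *)
Definition enc_lit (R : fieldType) (n : nat) (l : literal n)
  : 'rV[R]_(n + n) * 'rV[R]_(n + n) :=
  if l.2 then (wq R l.1, wp R l.1) else (wp R l.1, wq R l.1).

(* z = product of encodings of the negated literals, as the formal word of
   its factors (in order). *)
Definition clause_word (R : fieldType) (n : nat) (c : seq (literal n))
  : seq ('rV[R]_(n + n) * 'rV[R]_(n + n)) :=
  map (fun l => enc_lit R (negl l)) c.

(* the matrix whose rows are the elements of s (row space = span of s) *)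
Definition span_seq (R : fieldType) (N : nat) (s : seq 'rV[R]_N)
  : 'M[R]_(size s, N) := \matrix_(k < size s, j < N) (s`_k) 0 j.

Definition Mspace (R : fieldType) (n : nat)
  (z : seq ('rV[R]_(n + n) * 'rV[R]_(n + n))) :=
  span_seq (map fst z).

(* (1,t) = {(x, t x)}; with row vectors x |-> x *m t^T *)
Definition graph_sp (R : fieldType) (n : nat) (t : 'M[R]_n) : 'M[R]_(n, n + n) :=
  row_mx 1%:M t^T.

Definition O1n (R : fieldType) (n : nat) (l : 'M[R]_n) : Prop :=
  is_diag_mx l /\ forall i, l i i = 1 \/ l i i = -1.

Definition Tprime (R : fieldType) (n : nat) (c : seq (literal n)) (l : 'M[R]_n)
  : Prop := O1n l /\ (Mspace (clause_word R c) <= graph_sp l)%MS.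

Definition satisfiable (n m : nat) (cls : 'I_m -> seq (literal n)) : Prop :=
  exists a : 'I_n -> bool, forall j, has (fun l : literal n => a l.1 == l.2) (cls j).

From HB Require Import structures.
From mathcomp Require Import all_boot all_order all_algebra.
Import Order.TTheory GRing.Theory Num.Theory.
Set Implicit Arguments. Unset Strict Implicit.
Local Open Scope ring_scope.

(* A sign matrix λ ∈ O(1)^n encodes the truth assignment
   a_λ(i) := (λ_ii = -1), and conversely every assignment a comes from the
   sign matrix λ_a = diag(±1) with a_{λ_a} = a.  For a diagonal λ, the graph
   (1,λ) contains a vector (c δ_i, c s δ_i) with c ≠ 0 exactly when λ_ii = s.
   The first vector of the factor encoding the negation of a literal on the
   variable i is of this shape, with s = +1 for a positive and s = -1 for a
   negative literal; hence M(z_j) ⊆ (1,λ) iff every literal of clause j is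
   false under a_λ, i.e. T'_j is the set of sign matrices whose assignment
   falsifies clause j.  The proposition follows: the T'_j cover O(1)^n iff
   every assignment falsifies some clause. *)

Definition sgn (R : pzRingType) (b : bool) : R := if b then 1 else -1.

Section GraphOfDiagonal.
Variables (R : fieldType) (n : nat).

Lemma row_mx_in_graph (t : 'M[R]_n) (x y : 'rV[R]_n) :
  (row_mx x y <= graph_sp t)%MS = (y == x *m t^T).
Proof.
rewrite /graph_sp; apply/submxP/eqP => [[u]|->].
  by rewrite mul_mx_row mulmx1 => /eq_row_mx [-> ->].
by exists x; rewrite mul_mx_row mulmx1.
Qed.

Lemma delta_mul_diag (l : 'M[R]_n) (i : 'I_n) : is_diag_mx l ->
  (delta_mx 0 i : 'rV[R]_n) *m l^T = l i i *: delta_mx 0 i.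
Proof.
move=> /is_diag_mxP l_diag; rewrite -rowE; apply/rowP => j; rewrite !mxE eqxx.
by case: (eqVneq j i) => [->|ji] /=; rewrite ?mulr1 // mulr0 l_diag.
Qed.

Lemma scaled_delta_in_graph (l : 'M[R]_n) (i : 'I_n) (c s : R) :
  is_diag_mx l -> c != 0 ->
  (row_mx (c *: delta_mx 0 i) ((c * s) *: delta_mx 0 i : 'rV_n) <= graph_sp l)%MS
  = (l i i == s).
Proof.
move=> l_diag c_neq0; rewrite row_mx_in_graph -scalemxAl delta_mul_diag //.
rewrite scalerA; apply/eqP/eqP => [/rowP/(_ i)|->] //.
by rewrite !mxE !eqxx !mulr1 => /(mulfI c_neq0).
Qed.

End GraphOfDiagonal.

Lemma span_seq_sub (R : fieldType) (N p : nat) (s : seq 'rV[R]_N)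
    (A : 'M[R]_(p, N)) :
  (span_seq s <= A)%MS = all (fun v => v <= A)%MS s.
Proof.
have row_span k : row k (span_seq s) = s`_k by apply/rowP => j; rewrite !mxE.
apply/row_subP/(all_nthP 0) => [sub k lt_k | all_sub k].
  by have := sub (Ordinal lt_k); rewrite row_span.
by rewrite row_span; apply: all_sub.
Qed.

Section ClauseSpaces.
Variables (R : fieldType) (n : nat).
Hypothesis two_neq0 : (2 : R) != 0.

Lemma witt_row (i : 'I_n) (b : bool) :
  (if b then wp R i else wq R i)
  = row_mx (2^-1 *: delta_mx 0 i) ((2^-1 * sgn R b) *: delta_mx 0 i : 'rV_n).
Proof.
rewrite /wp /wq /ex /ey /sgn.
case: b; rewrite ?opp_row_mx ?oppr0 add_row_mx add0r addr0 scale_row_mx.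
  by rewrite mulr1.
by rewrite mulrN1 scaleNr scalerN.
Qed.

Lemma neg_literal_in_graph (l : 'M[R]_n) (x : literal n) : is_diag_mx l ->
  ((enc_lit R (negl x)).1 <= graph_sp l)%MS = (l x.1 x.1 == sgn R x.2).
Proof.
move=> l_diag; have -> : (enc_lit R (negl x)).1 = if x.2 then wp R x.1
    else wq R x.1 by rewrite /enc_lit /negl; case: x.2.
by rewrite witt_row scaled_delta_in_graph // invr_eq0.
Qed.

Lemma clause_space_in_graph (l : 'M[R]_n) (c : seq (literal n)) :
  is_diag_mx l ->
  (Mspace (clause_word R c) <= graph_sp l)%MS
  = all (fun x : literal n => l x.1 x.1 == sgn R x.2) c.
Proof.
move=> l_diag; rewrite /Mspace /clause_word span_seq_sub -map_comp all_map.
by apply: eq_all => x; rewrite /= neg_literal_in_graph.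
Qed.

Definition assignment_of (l : 'M[R]_n) (i : 'I_n) : bool := l i i == -1.

Definition sign_matrix (a : 'I_n -> bool) : 'M[R]_n :=
  diag_mx (\row_i sgn R (~~ a i)).

(* In characteristic ≠ 2 the two signs differ, so a ±1 entry determines a bit. *)
Lemma one_neq_m1 : (1 : R) != -1.
Proof. by rewrite -subr_eq0 opprK. Qed.

Lemma sign_matrix_O1n (a : 'I_n -> bool) : O1n (sign_matrix a).
Proof.
split; first exact: diag_mx_is_diag.
by move=> i; rewrite !mxE eqxx mulr1n /sgn; case: (a i); [right|left].
Qed.

Lemma assignment_of_sign_matrix (a : 'I_n -> bool) :
  assignment_of (sign_matrix a) =1 a.
Proof.
move=> i; rewrite /assignment_of !mxE eqxx mulr1n /sgn.
by case: (a i); rewrite /= ?eqxx // (negbTE one_neq_m1).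
Qed.

Lemma sign_entry_decode (l : 'M[R]_n) (i : 'I_n) (b : bool) :
  l i i = 1 \/ l i i = -1 -> (l i i == sgn R b) = (assignment_of l i != b).
Proof.
have m1_neq1 : ((-1 : R) == 1) = false by rewrite eq_sym (negbTE one_neq_m1).
rewrite /assignment_of /sgn.
by case=> ->; case: b; rewrite ?eqxx ?(negbTE one_neq_m1) ?m1_neq1.
Qed.

Lemma Tprime_falsifies (l : 'M[R]_n) (c : seq (literal n)) : O1n l ->
  Tprime c l <-> ~~ has (fun x : literal n => assignment_of l x.1 == x.2) c.
Proof.
move=> [l_diag l_sign]; rewrite /Tprime clause_space_in_graph // -all_predC.
have -> : all (fun x : literal n => l x.1 x.1 == sgn R x.2) c
        = all (predC (fun x : literal n => assignment_of l x.1 == x.2)) c.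
  by apply: eq_all => x; rewrite /= sign_entry_decode.
by split=> [[]|].
Qed.

End ClauseSpaces.

Theorem proposition5 (R : realFieldType) (n m : nat)
  (cls : 'I_m -> seq (literal n))
  (Hdistinct : forall j, uniq (map fst (cls j))) :
  ~ satisfiable cls <->
  (forall l : 'M[R]_n, (exists j : 'I_m, @Tprime R n (cls j) l) <-> O1n l).
Proof.
have two_neq0 : (2 : R) != 0 by rewrite pnatr_eq0.
split=> [unsat l | cover [a sat_a]].
- split=> [[j []] // | l_O1n].
  (* some clause is falsified by the assignment a_λ, otherwise it satisfies S *)
  have [j falsified] : exists j, ~~ has (fun x : literal n =>
      assignment_of l x.1 == x.2) (cls j).
    apply/existsP; apply: contraT => /existsPn all_sat.
    by case: unsat; exists (assignment_of l) => j; apply/negPn/all_sat.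
  by exists j; apply/Tprime_falsifies.
- (* the sign matrix of a satisfying assignment lies in no T'_j *)
  have sign_a := sign_matrix_O1n R a.
  have [j] := (cover (sign_matrix R a)).2 sign_a.
  have same_values : (fun x : literal n =>
      assignment_of (sign_matrix R a) x.1 == x.2) =1 (fun x => a x.1 == x.2).
    by move=> x /=; rewrite assignment_of_sign_matrix.
  by move/(Tprime_falsifies two_neq0 _ sign_a); rewrite (eq_has same_values) sat_a.
Qed.
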